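(* For a hat (basic or triangulated) with parameters $\alpha,\beta,\gamma$ (with $\gamma=0$ for basic hats), if $\alpha>2\beta+\gamma$, then at each middle vertex $m$, the sum of the face angles at $m$ of all faces incident to $m$ except one of the (two) spike triangles incident to $m$ is greater than $2\pi$ (i.e., the middle vertices still have negative curvature when one spike triangle is removed). Moreover, for any $\beta,\gamma$ with $30^\circ\le\beta+\gamma/2<45^\circ$ and $0\le\gamma<60^\circ$, there exists $\alpha$ with $30^\circ\le\alpha<90^\circ$ and $\alpha>2\beta+\gamma$.
   Context: Hats are open polyhedra whose boundary is an equilateral triangle; the three boundary vertices are the corners, there is one innermost vertex called the tip, and three middle vertices. The three triangles incident to the tip form the spike: three congruent isosceles triangles with base angles $\alpha$ and unit-length base edges; the middle vertices are the base vertices of the spike. The remaining faces form the brim. Basic hat: parameters $30^\circ\le\alpha,\beta<90^\circ$, $\ell>1$, and $\gamma=0$; the brim consists of three congruent symmetric trapezoids with lower angles $\beta$, top side of length $1$ (a spike base edge) and bottom side of length $\ell$ (a boundary edge). Triangulated hat: parameters with $30^\circ\le\alpha<90^\circ$, $30^\circ\le\beta+\gamma/2<90^\circ$, $\gamma<60^\circ$; the brim consists of three congruent isosceles triangles with bases on the boundary edges, base angles $\beta$ and apex at a middle vertex, and three congruent isosceles triangles with bases the spike base edges and apex angle $\gamma$ at a corner. Curvature of a non-boundary vertex is $2\pi$ minus the sum of face angles at it. *)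

From Stdlib Require Import Reals List.
Import ListNotations.
Open Scope R_scope.

Definition deg (x : R) : R := x * PI / 180.

Inductive idx := I0 | I1 | I2.
Definition succ (i : idx) : idx :=
  match i with I0 => I1 | I1 => I2 | I2 => I0 end.

Inductive vertex := Tip | Mid (i : idx) | Corner (i : idx).

Definition vertex_eq_dec (v w : vertex) : {v = w} + {v <> w}.
Proof. decide equality; decide equality. Defined.

(* Faces of a hat (combinatorial description, i ranges over idx):
   Spike i : triangle (Tip, m_i, m_{i+1})                        [spike]
   Trap  i : trapezoid, top side m_i m_{i+1}, bottom c_i c_{i+1} [basic brim]
   BTri  i : triangle with base c_i c_{i+1}, apex m_{i+1}        [triangulated brim]
   CTri  i : triangle with base m_i m_{i+1}, apex c_i            [triangulated brim] *)
Inductive face := Spike (i : idx) | Trap (i : idx) | BTri (i : idx) | CTri (i : idx).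

Definition face_eq_dec (f g : face) : {f = g} + {f <> g}.
Proof. decide equality; decide equality. Defined.

Definition face_vertices (f : face) : list vertex :=
  match f with
  | Spike i => [Tip; Mid i; Mid (succ i)]
  | Trap i => [Mid i; Mid (succ i); Corner (succ i); Corner i]
  | BTri i => [Corner i; Corner (succ i); Mid (succ i)]
  | CTri i => [Mid i; Mid (succ i); Corner i]
  end.

Definition is_spike (f : face) : Prop :=
  match f with Spike _ => True | _ => False end.

Inductive hat_kind := Basic | Triangulated.

(* Parameters of a hat; ell is only used for basic hats. *)
Record hat := mkHat {
  kind : hat_kind; alpha : R; beta : R; gamma : R; ell : R }.

Definition valid_hat (h : hat) : Prop :=
  match kind h with
  | Basic =>
      deg 30 <= alpha h < deg 90 /\ deg 30 <= beta h < deg 90 /\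
      1 < ell h /\ gamma h = 0
  | Triangulated =>
      deg 30 <= alpha h < deg 90 /\
      deg 30 <= beta h + gamma h / 2 < deg 90 /\ gamma h < deg 60
  end.

Definition all_idx : list idx := [I0; I1; I2].

Definition faces (h : hat) : list face :=
  map Spike all_idx ++
  match kind h with
  | Basic => map Trap all_idx
  | Triangulated => map BTri all_idx ++ map CTri all_idx
  end.

(* Face angle of face f at vertex v (0 if v is not a vertex of f),
   determined by the shape of the face:
   - spike triangle: isosceles, base angles alpha (at the middle vertices),
     apex angle pi - 2 alpha at the tip;
   - symmetric trapezoid: lower angles beta (at the corners), upper angles
     pi - beta (at the middle vertices);
   - boundary triangle: isosceles, base angles beta (at the corners),
     apex angle pi - 2 beta at the middle vertex;
   - corner triangle: isosceles, apex angle gamma at the corner,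
     base angles (pi - gamma)/2 at the middle vertices. *)
Definition face_angle (h : hat) (f : face) (v : vertex) : R :=
  match f with
  | Spike i =>
      if vertex_eq_dec v Tip then PI - 2 * alpha h
      else if vertex_eq_dec v (Mid i) then alpha h
      else if vertex_eq_dec v (Mid (succ i)) then alpha h else 0
  | Trap i =>
      if vertex_eq_dec v (Mid i) then PI - beta h
      else if vertex_eq_dec v (Mid (succ i)) then PI - beta h
      else if vertex_eq_dec v (Corner i) then beta h
      else if vertex_eq_dec v (Corner (succ i)) then beta h else 0
  | BTri i =>
      if vertex_eq_dec v (Mid (succ i)) then PI - 2 * beta h
      else if vertex_eq_dec v (Corner i) then beta h
      else if vertex_eq_dec v (Corner (succ i)) then beta h else 0
  | CTri i =>
      if vertex_eq_dec v (Corner i) then gamma h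
      else if vertex_eq_dec v (Mid i) then (PI - gamma h) / 2
      else if vertex_eq_dec v (Mid (succ i)) then (PI - gamma h) / 2 else 0
  end.

Definition angle_sum_except (h : hat) (v : vertex) (s : face) : R :=
  fold_right Rplus 0
    (map (fun f => face_angle h f v)
       (filter (fun f =>
                  if face_eq_dec f s then false
                  else if in_dec vertex_eq_dec v (face_vertices f) then true
                  else false) (faces h))).

(** At a middle vertex m_i the incident faces are the spikes i-1 and i (angle
    alpha each) and, in the brim, either the trapezoids i-1 and i (angle
    pi - beta each) or the boundary triangle i-1 (angle pi - 2 beta) and the
    corner triangles i-1 and i (angle (pi - gamma)/2 each). Dropping one spike
    leaves 2 pi + alpha - 2 beta - gamma in both cases (gamma = 0 for basic
    hats), which exceeds 2 pi exactly when alpha > 2 beta + gamma. For the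
    second part, 2 beta + gamma = 2 (beta + gamma/2) lies in [60, 90) degrees,
    so the midpoint between it and 90 degrees is a valid alpha. *)

From Stdlib Require Import Reals List Lra.
Open Scope R_scope.

Lemma spike_mid_cases (i j : idx) :
  In (Mid i) (face_vertices (Spike j)) -> j = i \/ succ j = i.
Proof.
  simpl; intros [H | [H | [H | []]]]; [discriminate | left | right]; congruence.
Qed.

Lemma angle_sum_except_mid_basic (h : hat) (i j : idx) :
  kind h = Basic -> j = i \/ succ j = i ->
  angle_sum_except h (Mid i) (Spike j) = 2 * PI + alpha h - 2 * beta h.
Proof.
  intros Hk [<- | <-]; unfold angle_sum_except, faces; rewrite Hk;
    destruct j; simpl; ring.
Qed.

Lemma angle_sum_except_mid_triangulated (h : hat) (i j : idx) :
  kind h = Triangulated -> j = i \/ succ j = i ->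
  angle_sum_except h (Mid i) (Spike j) = 2 * PI + alpha h - 2 * beta h - gamma h.
Proof.
  intros Hk [<- | <-]; unfold angle_sum_except, faces; rewrite Hk;
    destruct j; simpl; field.
Qed.

Lemma angle_sum_except_mid (h : hat) (i j : idx) :
  valid_hat h -> In (Mid i) (face_vertices (Spike j)) ->
  angle_sum_except h (Mid i) (Spike j) = 2 * PI + alpha h - 2 * beta h - gamma h.
Proof.
  intros Hv Hin; apply spike_mid_cases in Hin.
  unfold valid_hat in Hv; destruct (kind h) eqn:Hk.
  - rewrite angle_sum_except_mid_basic by assumption; lra.
  - exact (angle_sum_except_mid_triangulated h i j Hk Hin).
Qed.

Theorem lemma7 :
  (forall (h : hat), valid_hat h -> alpha h > 2 * beta h + gamma h ->
     forall (i : idx) (s : face),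
       In s (faces h) -> is_spike s -> In (Mid i) (face_vertices s) ->
       angle_sum_except h (Mid i) s > 2 * PI)
  /\
  (forall b g : R, deg 30 <= b + g / 2 < deg 45 -> 0 <= g < deg 60 ->
     exists a : R, deg 30 <= a < deg 90 /\ a > 2 * b + g).
Proof.
  split.
  - intros h Hv Ha i [j | | |] _ Hs Hin; try contradiction.
    rewrite angle_sum_except_mid by assumption; lra.
  - intros b g Hb _.
    exists ((2 * b + g + deg 90) / 2).
    pose proof PI_RGT_0; unfold deg in *; lra.
Qed.
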